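(* There is an absolute constant $C$ such that for every $g:\{0,1\}^n\to\{0,1\}$ and all $0<\delta<\epsilon<1/2$, $$\log\mathsf{qprt}_\delta(g)\le\frac{C}{(1/2-\epsilon)^2}\log\frac1\delta\cdot\log\mathsf{qprt}_\epsilon(g).$$
   Context: For $s\in\{0,1,\star\}^n$ the subcube with support $s$ is $\{x\in\{0,1\}^n: s_i\ne\star\Rightarrow x_i=s_i\}$, and for such a subcube $A$, $|A|$ is the number of $i$ with $s_i\in\{0,1\}$. $\mathsf{qprt}_\epsilon(g)$ is the optimal value of the LP: minimize $\sum_{z\in\{0,1\}}\sum_A w_{z,A}2^{|A|}$ over subcubes $A$, subject to $\sum_{A\ni x}w_{g(x),A}\ge1-\epsilon$ for all $x$; $\sum_{A\ni x}\sum_z w_{z,A}=1$ for all $x$; $w_{z,A}\ge0$. Logs base 2. *)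

From Stdlib Require Import Reals List ClassicalEpsilon.
Import ListNotations.
Open Scope R_scope.

(* Points of {0,1}^n are lists of booleans of length n.
   A subcube is given by its support s in {0,1,*}^n, encoded as a list of
   length n of [option bool]: [Some b] = fixed coordinate b, [None] = star. *)
Definition support := list (option bool).

Fixpoint all_supports (n : nat) : list support :=
  match n with
  | O => [ [] ]
  | S m => flat_map (fun s => [None :: s; Some false :: s; Some true :: s])
                    (all_supports m)
  end.

Fixpoint in_subcube (x : list bool) (s : support) : Prop :=
  match x, s with
  | [], [] => True
  | b :: x', None :: s' => in_subcube x' s'
  | b :: x', Some c :: s' => b = c /\ in_subcube x' s'
  | _, _ => False
  end.

Fixpoint codim (s : support) : nat :=
  match s with
  | [] => O
  | None :: s' => codim s'
  | Some _ :: s' => S (codim s')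
  end.

Definition lsum {A : Type} (f : A -> R) (l : list A) : R :=
  fold_right (fun a r => f a + r) 0 l.

Definition sum_containing (n : nat) (x : list bool) (f : support -> R) : R :=
  lsum (fun s => f s) (filter (fun s =>
     if (excluded_middle_informative (in_subcube x s)) then true else false)
     (all_supports n)).

Definition qprt_objective (n : nat) (w : bool -> support -> R) : R :=
  lsum (fun z => lsum (fun s => w z s * 2 ^ codim s) (all_supports n))
       [false; true].

Definition qprt_feasible (n : nat) (eps : R) (g : list bool -> bool)
  (w : bool -> support -> R) : Prop :=
  (forall z s, In s (all_supports n) -> 0 <= w z s) /\
  (forall x : list bool, length x = n ->
     sum_containing n x (w (g x)) >= 1 - eps) /\
  (forall x : list bool, length x = n ->
     sum_containing n x (fun s => lsum (fun z => w z s) [false; true]) = 1).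

Definition is_inf (E : R -> Prop) (m : R) : Prop :=
  (forall x, E x -> m <= x) /\ (forall b, (forall x, E x -> b <= x) -> b <= m).

Definition qprt (n : nat) (eps : R) (g : list bool -> bool) : R :=
  epsilon (inhabits 0)
    (is_inf (fun v => exists w, qprt_feasible n eps g w /\ v = qprt_objective n w)).

Definition log2 (x : R) : R := ln x / ln 2.

(* Amplification by independent repetition.  Given a feasible solution [w] for
   error [eps], take every sequence of [k] labelled subcubes with nonempty
   intersection, give the intersection the product of their weights and label it
   by the majority of their labels.  For a fixed input [x], the sequences whose
   intersection contains [x] carry the [k]-fold product of the label distribution
   at [x], whose correct label has probability at least [1 - eps]; a Chernoff bound
   makes the majority wrong with probability at most [(4 eps (1 - eps))^(k/2)].
   Codimensions are subadditive under intersection, so the objective is at most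
   the [k]-th power of the original one.  With [k] about
   [ln (1/delta) / (2 (1/2 - eps)^2)] this gives the theorem with [C = 1]. *)

From Stdlib Require Import Reals Lra Lia ZArith List ClassicalEpsilon.
Import ListNotations.
Open Scope R_scope.

Lemma lsum_nil {A} (f : A -> R) : lsum f [] = 0.
Proof. reflexivity. Qed.

Lemma lsum_cons {A} (f : A -> R) a l : lsum f (a :: l) = f a + lsum f l.
Proof. reflexivity. Qed.

Lemma lsum_app {A} (f : A -> R) l1 l2 : lsum f (l1 ++ l2) = lsum f l1 + lsum f l2.
Proof.
  induction l1 as [|a l1 IH]; cbn [app]; [cbn; lra|].
  rewrite !lsum_cons, IH; lra.
Qed.

Lemma lsum_flat_map {A B} (f : B -> R) (g : A -> list B) l :
  lsum f (flat_map g l) = lsum (fun a => lsum f (g a)) l.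
Proof.
  induction l as [|a l IH]; [reflexivity|].
  cbn [flat_map]; rewrite lsum_app, lsum_cons, IH; reflexivity.
Qed.

Lemma lsum_map {A B} (f : B -> R) (g : A -> B) l :
  lsum f (map g l) = lsum (fun a => f (g a)) l.
Proof.
  induction l as [|a l IH]; [reflexivity|].
  cbn [map]; rewrite !lsum_cons, IH; reflexivity.
Qed.

Lemma lsum_ext {A} (f g : A -> R) l :
  (forall a, In a l -> f a = g a) -> lsum f l = lsum g l.
Proof.
  induction l as [|a l IH]; intros H; [reflexivity|].
  rewrite !lsum_cons, H, IH; auto with datatypes.
Qed.

Lemma lsum_le {A} (f g : A -> R) l :
  (forall a, In a l -> f a <= g a) -> lsum f l <= lsum g l.
Proof.
  induction l as [|a l IH]; intros H; [cbn; lra|].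
  rewrite !lsum_cons. assert (f a <= g a) by auto with datatypes.
  assert (lsum f l <= lsum g l) by auto with datatypes. lra.
Qed.

Lemma lsum_const0 {A} (l : list A) : lsum (fun _ => 0) l = 0.
Proof. induction l as [|a l IH]; [reflexivity|]. rewrite lsum_cons, IH; lra. Qed.

Lemma lsum_nonneg {A} (f : A -> R) l : (forall a, In a l -> 0 <= f a) -> 0 <= lsum f l.
Proof. intros H. rewrite <- (lsum_const0 l). apply lsum_le, H. Qed.

Lemma lsum_add {A} (f g : A -> R) l : lsum (fun a => f a + g a) l = lsum f l + lsum g l.
Proof. induction l as [|a l IH]; [cbn; lra|]. rewrite !lsum_cons, IH; lra. Qed.

Lemma lsum_mull {A} (c : R) (f : A -> R) l : lsum (fun a => c * f a) l = c * lsum f l.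
Proof. induction l as [|a l IH]; [cbn; lra|]. rewrite !lsum_cons, IH; lra. Qed.

Lemma lsum_mulr {A} (c : R) (f : A -> R) l : lsum (fun a => f a * c) l = lsum f l * c.
Proof. induction l as [|a l IH]; [cbn; lra|]. rewrite !lsum_cons, IH; lra. Qed.

Lemma lsum_exchange {A B} (F : A -> B -> R) l1 l2 :
  lsum (fun a => lsum (F a) l2) l1 = lsum (fun b => lsum (fun a => F a b) l1) l2.
Proof.
  induction l1 as [|a l1 IH]; [symmetry; apply lsum_const0|].
  rewrite lsum_cons, IH, <- lsum_add; reflexivity.
Qed.

Lemma lsum_filter {A} (f : A -> R) (p : A -> bool) l :
  lsum f (filter p l) = lsum (fun a => if p a then f a else 0) l.
Proof.
  induction l as [|a l IH]; [reflexivity|].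
  cbn [filter]; rewrite lsum_cons; destruct (p a); rewrite ?lsum_cons, IH; lra.
Qed.

Lemma lsum_bool (f : bool -> R) : lsum f [false; true] = f false + f true.
Proof. cbn; lra. Qed.

Lemma lsum_list_prod {A B} (f : A * B -> R) l1 l2 :
  lsum f (list_prod l1 l2) = lsum (fun a => lsum (fun b => f (a, b)) l2) l1.
Proof. rewrite list_prod_as_flat_map, lsum_flat_map. apply lsum_ext; intros; apply lsum_map. Qed.

Definition agrees (b : bool) (o : option bool) : bool :=
  match o with None => true | Some c => Bool.eqb b c end.

Fixpoint in_subcubeb (x : list bool) (s : support) : bool :=
  match x, s with
  | [], [] => true
  | b :: x', o :: s' => agrees b o && in_subcubeb x' s'
  | _, _ => false
  end.

Lemma in_subcubebP x s : in_subcubeb x s = true <-> in_subcube x s.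
Proof.
  revert s; induction x as [|b x IH]; intros [|[c|] s]; cbn; try tauto; try easy.
  rewrite Bool.andb_true_iff, IH, Bool.eqb_true_iff; reflexivity.
Qed.

Lemma in_subcubeb_length x s : in_subcubeb x s = true -> length x = length s.
Proof.
  revert s; induction x as [|b x IH]; intros [|o s]; cbn; try easy.
  rewrite Bool.andb_true_iff; intros [_ H]; f_equal; auto.
Qed.

Lemma in_subcubeb_full x : in_subcubeb x (repeat None (length x)) = true.
Proof. induction x; cbn; auto. Qed.

Lemma codim_full n : codim (repeat None n) = 0%nat.
Proof. induction n; cbn; auto. Qed.

Lemma codim_le_length s : (codim s <= length s)%nat.
Proof. induction s as [|[|] s]; cbn; lia. Qed.

Definition support_eq_dec (s t : support) : {s = t} + {s <> t}.
Proof. repeat decide equality. Defined.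

Lemma in_subcubeb_codim_full x s :
  (in_subcubeb x s && Nat.eqb (codim s) (length x))%bool = true <-> s = map Some x.
Proof.
  rewrite Bool.andb_true_iff, Nat.eqb_eq.
  revert s; induction x as [|b x IH]; intros [|[c|] s]; cbn; try easy.
  - rewrite Bool.andb_true_iff, Bool.eqb_true_iff.
    split; [intros [[-> Hs] Hc]; f_equal; apply IH; auto|].
    intros H; injection H as -> ->. destruct (proj2 (IH (map Some x)) eq_refl).
    repeat split; auto.
  - split; [|discriminate]. intros [Hs Hc].
    pose proof (codim_le_length s). apply in_subcubeb_length in Hs. lia.
Qed.

Lemma lsum_all_supports_eq n s0 (f : support -> R) : length s0 = n ->
  lsum (fun s => if support_eq_dec s s0 then f s else 0) (all_supports n) = f s0.
Proof.
  revert s0 f; induction n as [|n IH]; intros s0 f Hl.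
  - destruct s0; [|discriminate]. cbn; lra.
  - destruct s0 as [|o s0]; [discriminate|]. injection Hl as Hl.
    cbn [all_supports]. rewrite lsum_flat_map, <- (IH s0 (fun s => f (o :: s)) Hl).
    apply lsum_ext; intros s _. rewrite !lsum_cons, lsum_nil.
    destruct (support_eq_dec s s0) as [->|ne].
    + destruct o as [[|]|]; repeat destruct support_eq_dec; try congruence; lra.
    + repeat destruct support_eq_dec; try congruence; lra.
Qed.

Lemma lsum_all_supports_fibres {T} n (L : list T) (c : T -> support)
  (G : T -> R) (h : support -> R) :
  (forall t, In t L -> length (c t) = n) ->
  lsum (fun s => h s * lsum (fun t => if support_eq_dec (c t) s then G t else 0) L)
    (all_supports n)
  = lsum (fun t => h (c t) * G t) L.
Proof.
  intros HL.
  transitivity (lsum (fun s => lsum (fun t =>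
      if support_eq_dec s (c t) then h s * G t else 0) L) (all_supports n)).
  { apply lsum_ext; intros s _. rewrite <- lsum_mull. apply lsum_ext; intros t _.
    do 2 destruct support_eq_dec; try congruence; lra. }
  rewrite lsum_exchange. apply lsum_ext; intros t Ht.
  exact (lsum_all_supports_eq n (c t) (fun s => h s * G t) (HL t Ht)).
Qed.

Fixpoint subcube_meet (s1 s2 : support) : option support :=
  match s1, s2 with
  | [], [] => Some []
  | o1 :: s1', o2 :: s2' =>
      match subcube_meet s1' s2' with
      | None => None
      | Some s =>
          match o1, o2 with
          | None, o | o, None => Some (o :: s)
          | Some b, Some c => if Bool.eqb b c then Some (Some b :: s) else None
          end
      end
  | _, _ => None
  end.

Lemma in_subcubeb_meet x s1 s2 :
  (in_subcubeb x s1 && in_subcubeb x s2)%bool =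
  match subcube_meet s1 s2 with Some s => in_subcubeb x s | None => false end.
Proof.
  revert s1 s2; induction x as [|b x IH]; intros [|o1 s1] [|o2 s2]; cbn; auto.
  all: try (destruct (subcube_meet s1 s2); auto; fail).
  - destruct (subcube_meet s1 s2); auto. destruct o1 as [[|]|], o2 as [[|]|]; auto.
  - apply Bool.andb_false_r.
  - specialize (IH s1 s2). destruct (subcube_meet s1 s2) as [s|];
      destruct (in_subcubeb x s1), (in_subcubeb x s2); cbn in IH; try discriminate;
      destruct o1 as [[|]|], o2 as [[|]|], b; cbn; rewrite <- ?IH; auto.
Qed.

Lemma subcube_meet_length s1 s2 s : subcube_meet s1 s2 = Some s -> length s = length s1.
Proof.
  revert s2 s; induction s1 as [|o1 s1 IH]; intros [|o2 s2] s H; cbn in H; try discriminate.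
  - injection H as <-; reflexivity.
  - destruct (subcube_meet s1 s2) as [t|] eqn:E; [|discriminate]. apply IH in E.
    destruct o1 as [b|], o2 as [c|]; try destruct (Bool.eqb b c); try discriminate;
      injection H as <-; cbn; auto.
Qed.

Lemma subcube_meet_codim s1 s2 s :
  subcube_meet s1 s2 = Some s -> (codim s <= codim s1 + codim s2)%nat.
Proof.
  revert s2 s; induction s1 as [|o1 s1 IH]; intros [|o2 s2] s H; cbn in H; try discriminate.
  - injection H as <-; cbn; lia.
  - destruct (subcube_meet s1 s2) as [t|] eqn:E; [|discriminate]. apply IH in E.
    destruct o1 as [b|], o2 as [c|]; try destruct (Bool.eqb b c); try discriminate;
      injection H as <-; cbn; lia.
Qed.

Definition sum_containingb (n : nat) (x : list bool) (f : support -> R) : R :=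
  lsum (fun s => if in_subcubeb x s then f s else 0) (all_supports n).

Lemma sum_containingE n x f : sum_containing n x f = sum_containingb n x f.
Proof.
  unfold sum_containing, sum_containingb. rewrite lsum_filter.
  apply lsum_ext; intros s _.
  pose proof (in_subcubebP x s).
  destruct excluded_middle_informative, in_subcubeb; intuition discriminate.
Qed.

Lemma sum_containingb_ext n x f g :
  (forall s, f s = g s) -> sum_containingb n x f = sum_containingb n x g.
Proof. intros H. apply lsum_ext; intros s _. rewrite H; reflexivity. Qed.

Lemma sum_containingb_add n x f g :
  sum_containingb n x (fun s => f s + g s) = sum_containingb n x f + sum_containingb n x g.
Proof.
  unfold sum_containingb. rewrite <- lsum_add.
  apply lsum_ext; intros s _. destruct (in_subcubeb x s); lra.
Qed.

Lemma sum_containingb_nonneg n x f :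
  (forall s, In s (all_supports n) -> 0 <= f s) -> 0 <= sum_containingb n x f.
Proof. intros H. apply lsum_nonneg; intros s Hs. destruct (in_subcubeb x s); auto; lra. Qed.

Lemma sum_containingb_point n x (F : support -> R) : length x = n ->
  sum_containingb n x (fun s => if Nat.eqb (codim s) n then F s else 0) = F (map Some x).
Proof.
  intros <-. rewrite <- (lsum_all_supports_eq (length x) (map Some x) F) by apply length_map.
  apply lsum_ext; intros s _. pose proof (in_subcubeb_codim_full x s) as Hfull.
  destruct support_eq_dec, in_subcubeb, Nat.eqb; cbn in Hfull; intuition congruence.
Qed.

Lemma feasible_mass n eps g w x : qprt_feasible n eps g w -> length x = n ->
  sum_containingb n x (w false) + sum_containingb n x (w true) = 1.
Proof.
  intros [_ [_ Hmass]] Hx. rewrite <- sum_containingb_add, <- (Hmass x Hx), sum_containingE.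
  apply sum_containingb_ext; intros s. rewrite lsum_bool; reflexivity.
Qed.

Definition point (s : support) : list bool :=
  map (fun o => match o with Some b => b | None => false end) s.

Lemma point_map_Some x : point (map Some x) = x.
Proof. induction x; cbn; f_equal; auto. Qed.

(* Answer [g] exactly on the partition of the cube into points. *)
Lemma qprt_feasible_points n eps g : 0 <= eps ->
  exists w, qprt_feasible n eps g w.
Proof.
  intros He.
  exists (fun z s => if Nat.eqb (codim s) n
                     then (if Bool.eqb z (g (point s)) then 1 else 0) else 0).
  split; [|split].
  - intros z s _. destruct (Nat.eqb (codim s) n), (Bool.eqb z (g (point s))); lra.
  - intros x Hx. rewrite sum_containingE,
      (sum_containingb_point n x (fun s => if Bool.eqb (g x) (g (point s)) then 1 else 0) Hx),
      point_map_Some, Bool.eqb_reflx. lra.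
  - intros x Hx. rewrite sum_containingE.
    transitivity (sum_containingb n x (fun s => if Nat.eqb (codim s) n then 1 else 0));
      [|exact (sum_containingb_point n x (fun _ => 1) Hx)].
    apply sum_containingb_ext; intros s. rewrite lsum_bool.
    destruct (Nat.eqb (codim s) n), (g (point s)); cbn; lra.
Qed.

Lemma qprt_objective_ge1 n eps g w : qprt_feasible n eps g w -> 1 <= qprt_objective n w.
Proof.
  intros Hf. pose proof (proj1 Hf) as Hw.
  pose proof (feasible_mass n eps g w (repeat false n) Hf (repeat_length false n)) as Hmass.
  assert (Hle : forall z, sum_containingb n (repeat false n) (w z)
                  <= lsum (fun s => w z s * 2 ^ codim s) (all_supports n)).
  { intros z. apply lsum_le; intros s Hs. pose proof (Hw z s Hs).
    pose proof (pow_R1_Rle 2 (codim s) ltac:(lra)). destruct in_subcubeb; nra. }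
  unfold qprt_objective. rewrite lsum_bool.
  pose proof (Hle false); pose proof (Hle true); lra.
Qed.

Lemma qprt_is_inf n eps g : 0 <= eps ->
  is_inf (fun v => exists w, qprt_feasible n eps g w /\ v = qprt_objective n w)
    (qprt n eps g).
Proof.
  intros He. unfold qprt. apply epsilon_spec.
  set (E := fun v => exists w, qprt_feasible n eps g w /\ v = qprt_objective n w).
  destruct (completeness (fun y => E (- y))) as [m [Hub Hlub]].
  - exists (-1). intros y [w [Hf Hy]]. apply qprt_objective_ge1 in Hf. lra.
  - destruct (qprt_feasible_points n eps g He) as [w Hw].
    exists (- qprt_objective n w), w. split; [exact Hw | ring].
  - exists (- m). split.
    + intros v Hv. enough (- v <= m) by lra. apply Hub. red. rewrite Ropp_involutive. exact Hv.
    + intros b Hb. enough (m <= - b) by lra. apply Hlub. intros y Hy. specialize (Hb _ Hy). lra.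
Qed.

Lemma qprt_ge1 n eps g : 0 <= eps -> 1 <= qprt n eps g.
Proof.
  intros He. apply (proj2 (qprt_is_inf n eps g He)).
  intros v [w [Hf ->]]. exact (qprt_objective_ge1 n eps g w Hf).
Qed.

Fixpoint disagree (b : bool) (vs : list bool) : nat :=
  match vs with
  | [] => O
  | v :: vs => ((if Bool.eqb v b then 0 else 1) + disagree b vs)%nat
  end.

(* Ties are decided in favour of [false]. *)
Definition majority (vs : list bool) : bool := Nat.ltb (length vs) (2 * disagree false vs).

Lemma disagree_false_true vs : (disagree false vs + disagree true vs)%nat = length vs.
Proof. induction vs as [|[|] vs IH]; cbn; lia. Qed.

Lemma majority_neq vs b : majority vs <> b -> (length vs <= 2 * disagree b vs)%nat.
Proof.
  unfold majority; pose proof (disagree_false_true vs) as Hsum.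
  destruct b, Nat.ltb eqn:E; intros H; try congruence;
    [apply Nat.ltb_ge in E | apply Nat.ltb_lt in E]; lia.
Qed.

Definition prod_votes (phi : bool -> R) (vs : list bool) : R :=
  fold_right (fun v r => phi v * r) 1 vs.

Lemma prod_votes_disagree (q : R) b vs :
  prod_votes (fun v => if Bool.eqb v b then 1 else q) vs = q ^ disagree b vs.
Proof.
  induction vs as [|v vs IH]; [reflexivity|].
  cbn [prod_votes fold_right disagree].
  fold (prod_votes (fun v => if Bool.eqb v b then 1 else q) vs). rewrite IH. destruct (Bool.eqb v b); cbn; ring.
Qed.

Lemma prod_votes_1 vs : prod_votes (fun _ => 1) vs = 1.
Proof.
  induction vs as [|v vs IH]; cbn; [reflexivity|].
  unfold prod_votes in IH; rewrite IH; ring.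
Qed.

Lemma tilted_mass_le eps a_good a_bad : 0 < eps < 1/2 -> 0 <= a_bad ->
  a_good + a_bad = 1 -> 1 - eps <= a_good ->
  a_good + (1 - eps) / eps * a_bad <= 2 * (1 - eps).
Proof.
  intros He Hbad Hsum Hgood.
  assert (Hq : (1 - eps) / eps * eps = 1 - eps) by (field; lra).
  assert (1 <= (1 - eps) / eps) by nra. nra.
Qed.

Lemma sq_le_of_tilted_bound eps E k : 0 < eps < 1/2 -> 0 <= E ->
  E * sqrt ((1 - eps) / eps) ^ k <= (2 * (1 - eps)) ^ k ->
  E ^ 2 <= (4 * eps * (1 - eps)) ^ k.
Proof.
  intros He HE Hbound.
  set (q := (1 - eps) / eps) in *. set (r := sqrt q) in *.
  assert (Hqeps : q * eps = 1 - eps) by (unfold q; field; lra).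
  assert (Hrr : r * r = q) by (apply sqrt_sqrt; unfold q; apply Rlt_le, Rdiv_lt_0_compat; lra).
  assert (Hsquare : 4 * eps * (1 - eps) * q = (2 * (1 - eps)) ^ 2).
  { replace (4 * eps * (1 - eps) * q) with (4 * (1 - eps) * (q * eps)) by ring.
    rewrite Hqeps; ring. }
  apply Rmult_le_reg_r with (q ^ k); [apply pow_lt; nra|].
  replace (E ^ 2 * q ^ k) with ((E * r ^ k) ^ 2)
    by (rewrite <- Hrr, (Rpow_mult_distr r r); ring).
  rewrite <- Rpow_mult_distr, Hsquare, <- pow_mult, Nat.mul_comm, pow_mult.
  assert (0 <= E * r ^ k) by (apply Rmult_le_pos; [lra | apply pow_le, sqrt_pos]).
  apply pow_incr; lra.
Qed.

Record piece := Piece { votes : list bool; cube : support; weight : R }.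

Section Amplification.

Variables (n : nat) (w : bool -> support -> R).
Hypothesis w_nonneg : forall z s, In s (all_supports n) -> 0 <= w z s.

Definition labelled_cubes : list (bool * support) := list_prod [false; true] (all_supports n).

Definition refine_piece (t : piece) (zs : bool * support) : list piece :=
  match subcube_meet (cube t) (snd zs) with
  | Some c => [Piece (fst zs :: votes t) c (weight t * w (fst zs) (snd zs))]
  | None => []
  end.

(* One piece per sequence of [k] labelled subcubes whose intersection is nonempty. *)
Fixpoint product_pieces (k : nat) : list piece :=
  match k with
  | O => [Piece [] (repeat None n) 1]
  | S k => flat_map (fun t => flat_map (refine_piece t) labelled_cubes) (product_pieces k)
  end.

Lemma lsum_labelled_cubes (f : bool -> support -> R) :
  lsum (fun zs => f (fst zs) (snd zs)) labelled_cubes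
  = lsum (f false) (all_supports n) + lsum (f true) (all_supports n).
Proof. unfold labelled_cubes. rewrite lsum_list_prod, lsum_bool. reflexivity. Qed.

Lemma lsum_refine_piece (F : piece -> R) t zs :
  lsum F (refine_piece t zs) =
  match subcube_meet (cube t) (snd zs) with
  | Some c => F (Piece (fst zs :: votes t) c (weight t * w (fst zs) (snd zs)))
  | None => 0
  end.
Proof. unfold refine_piece. destruct subcube_meet; cbn; lra. Qed.

Lemma in_refine_piece t zs t' : In t' (refine_piece t zs) ->
  exists c, subcube_meet (cube t) (snd zs) = Some c /\
            t' = Piece (fst zs :: votes t) c (weight t * w (fst zs) (snd zs)).
Proof.
  unfold refine_piece. destruct subcube_meet as [c|]; [|intros []].
  intros [<-|[]]. exists c; split; reflexivity.
Qed.

Lemma product_piece_lengths k t : In t (product_pieces k) ->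
  length (cube t) = n /\ length (votes t) = k.
Proof.
  revert t; induction k as [|k IH]; cbn [product_pieces]; intros t Ht.
  - destruct Ht as [<-|[]]. split; [apply repeat_length | reflexivity].
  - apply in_flat_map in Ht as [t0 [Ht0 Ht]]. apply in_flat_map in Ht as [zs [_ Ht]].
    apply in_refine_piece in Ht as [c [E ->]]. destruct (IH t0 Ht0) as [Hc Hv]. cbn.
    split; [rewrite (subcube_meet_length _ _ _ E); exact Hc | f_equal; exact Hv].
Qed.

Lemma product_piece_weight_nonneg k t : In t (product_pieces k) -> 0 <= weight t.
Proof.
  revert t; induction k as [|k IH]; cbn [product_pieces]; intros t Ht.
  - destruct Ht as [<-|[]]. cbn; lra.
  - apply in_flat_map in Ht as [t0 [Ht0 Ht]]. apply in_flat_map in Ht as [[z s] [Hzs Ht]].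
    apply in_refine_piece in Ht as [c [_ ->]]. apply in_prod_iff in Hzs as [_ Hs].
    apply Rmult_le_pos; auto.
Qed.

Lemma sum_product_pieces_containing k x (phi : bool -> R) : length x = n ->
  lsum (fun t => if in_subcubeb x (cube t) then weight t * prod_votes phi (votes t) else 0)
    (product_pieces k)
  = (phi false * sum_containingb n x (w false) + phi true * sum_containingb n x (w true)) ^ k.
Proof.
  intros Hx. induction k as [|k IH].
  - cbn [product_pieces]. rewrite lsum_cons, lsum_nil. cbn [cube weight votes].
    rewrite <- Hx, in_subcubeb_full. cbn; lra.
  - cbn [product_pieces pow]. rewrite lsum_flat_map, Rmult_comm, <- IH, <- lsum_mulr.
    apply lsum_ext; intros t _. rewrite lsum_flat_map.
    transitivity (lsum (fun zs =>
        (if in_subcubeb x (cube t) then weight t * prod_votes phi (votes t) else 0)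
        * (phi (fst zs) * (if in_subcubeb x (snd zs) then w (fst zs) (snd zs) else 0)))
      labelled_cubes).
    + apply lsum_ext; intros [z s] _. rewrite lsum_refine_piece. cbn [fst snd].
      pose proof (in_subcubeb_meet x (cube t) s) as Hmeet.
      destruct subcube_meet; cbn [cube weight votes prod_votes fold_right];
        destruct (in_subcubeb x (cube t)), (in_subcubeb x s); cbn in Hmeet;
        try discriminate; rewrite <- ?Hmeet; fold (prod_votes phi (votes t)); ring.
    + rewrite lsum_mull,
        (lsum_labelled_cubes (fun z s => phi z * (if in_subcubeb x s then w z s else 0))).
      unfold sum_containingb.
      rewrite <- !lsum_mull. reflexivity.
Qed.

Lemma qprt_objectiveE :
  qprt_objective n w = lsum (fun zs => w (fst zs) (snd zs) * 2 ^ codim (snd zs)) labelled_cubes.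
Proof.
  rewrite (lsum_labelled_cubes (fun z s => w z s * 2 ^ codim s)).
  unfold qprt_objective. apply lsum_bool.
Qed.

Lemma objective_product_pieces k :
  lsum (fun t => weight t * 2 ^ codim (cube t)) (product_pieces k) <= qprt_objective n w ^ k.
Proof.
  induction k as [|k IH].
  - cbn [product_pieces]. rewrite lsum_cons, lsum_nil. cbn [cube weight].
    rewrite codim_full. cbn; lra.
  - cbn [product_pieces pow]. rewrite lsum_flat_map, Rmult_comm.
    assert (Hobj : 0 <= qprt_objective n w).
    { rewrite qprt_objectiveE. apply lsum_nonneg; intros [z s] Hzs.
      apply in_prod_iff in Hzs as [_ Hs]. pose proof (pow_le 2 (codim s) ltac:(lra)).
      apply Rmult_le_pos; auto; lra. }
    eapply Rle_trans; [|apply Rmult_le_compat_r; [exact Hobj | exact IH]].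
    rewrite qprt_objectiveE, <- lsum_mulr. apply lsum_le; intros t Ht.
    rewrite lsum_flat_map, <- lsum_mull. apply lsum_le; intros [z s] Hzs.
    rewrite lsum_refine_piece. cbn [fst snd].
    apply in_prod_iff in Hzs as [_ Hs].
    pose proof (product_piece_weight_nonneg k t Ht) as Hwt. pose proof (w_nonneg z s Hs).
    pose proof (pow_le 2 (codim s) ltac:(lra)).
    pose proof (pow_le 2 (codim (cube t)) ltac:(lra)).
    destruct (subcube_meet (cube t) s) as [c|] eqn:E; cbn [weight cube].
    + apply subcube_meet_codim in E.
      assert (2 ^ codim c <= 2 ^ codim (cube t) * 2 ^ codim s).
      { rewrite <- pow_add. apply Rle_pow; lra || lia. }
      assert (0 <= weight t * w z s) by (apply Rmult_le_pos; auto).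
      nra.
    + apply Rmult_le_pos; apply Rmult_le_pos; lra.
Qed.

Definition amplified (k : nat) (z : bool) (s : support) : R :=
  lsum (fun t => if support_eq_dec (cube t) s
                 then (if Bool.eqb (majority (votes t)) z then weight t else 0) else 0)
    (product_pieces k).

Lemma amplified_nonneg k z s : 0 <= amplified k z s.
Proof.
  apply lsum_nonneg; intros t Ht. pose proof (product_piece_weight_nonneg k t Ht) as Hwt.
  destruct (support_eq_dec (cube t) s), (Bool.eqb (majority (votes t)) z); lra.
Qed.

Lemma lsum_all_supports_amplified k z (h : support -> R) :
  lsum (fun s => h s * amplified k z s) (all_supports n)
  = lsum (fun t => h (cube t) * (if Bool.eqb (majority (votes t)) z then weight t else 0))
      (product_pieces k).
Proof.
  apply lsum_all_supports_fibres. intros t Ht. apply (product_piece_lengths k t Ht).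
Qed.

Lemma sum_containingb_amplified k z x :
  sum_containingb n x (amplified k z)
  = lsum (fun t => if (in_subcubeb x (cube t) && Bool.eqb (majority (votes t)) z)%bool
                   then weight t else 0) (product_pieces k).
Proof.
  transitivity (lsum (fun s => (if in_subcubeb x s then 1 else 0) * amplified k z s)
                  (all_supports n)).
  { apply lsum_ext; intros s _. destruct in_subcubeb; lra. }
  rewrite lsum_all_supports_amplified. apply lsum_ext; intros t _.
  destruct in_subcubeb, Bool.eqb; cbn; lra.
Qed.

Lemma objective_amplified k :
  qprt_objective n (amplified k)
  = lsum (fun t => weight t * 2 ^ codim (cube t)) (product_pieces k).
Proof.
  unfold qprt_objective. rewrite lsum_bool.
  rewrite !(lsum_ext (fun s => amplified k _ s * 2 ^ codim s)
                     (fun s => 2 ^ codim s * amplified k _ s)) by (intros; ring).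
  rewrite !lsum_all_supports_amplified, <- lsum_add.
  apply lsum_ext; intros t _. destruct (majority (votes t)); cbn; ring.
Qed.

Lemma mass_product_pieces k x : length x = n ->
  sum_containingb n x (w false) + sum_containingb n x (w true) = 1 ->
  lsum (fun t => if in_subcubeb x (cube t) then weight t else 0) (product_pieces k) = 1.
Proof.
  intros Hx Hmass.
  transitivity (lsum (fun t => if in_subcubeb x (cube t)
                  then weight t * prod_votes (fun _ => 1) (votes t) else 0) (product_pieces k)).
  { apply lsum_ext; intros t _. rewrite prod_votes_1, Rmult_1_r; reflexivity. }
  rewrite sum_product_pieces_containing, !Rmult_1_l, Hmass by exact Hx. apply pow1.
Qed.

(* A Chernoff bound: weighting every wrong vote by [q = (1 - eps) / eps] keeps the
   total weight below [(2 (1 - eps))^k], while a wrong majority carries weight at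
   least [q^(k/2)]. *)
Lemma wrong_majority_mass k x b eps : length x = n -> 0 < eps < 1/2 ->
  sum_containingb n x (w false) + sum_containingb n x (w true) = 1 ->
  1 - eps <= sum_containingb n x (w b) ->
  (lsum (fun t => if (in_subcubeb x (cube t) && negb (Bool.eqb (majority (votes t)) b))%bool
                  then weight t else 0) (product_pieces k)) ^ 2
  <= (4 * eps * (1 - eps)) ^ k.
Proof.
  intros Hx He Hmass Hb.
  apply sq_le_of_tilted_bound; [exact He| |].
  { apply lsum_nonneg; intros t Ht. pose proof (product_piece_weight_nonneg k t Ht).
    destruct (_ && _)%bool; lra. }
  set (q := (1 - eps) / eps). set (r := sqrt q).
  assert (Hq1 : 1 <= q) by (assert (q * eps = 1 - eps) by (unfold q; field; lra); nra).
  assert (Hrr : r * r = q) by (apply sqrt_sqrt; lra).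
  assert (Hr1 : 1 <= r) by (assert (0 <= r) by apply sqrt_pos; nra).
  set (phi := fun v => if Bool.eqb v b then 1 else q).
  assert (Htilt : 0 <= phi false * sum_containingb n x (w false)
                         + phi true * sum_containingb n x (w true) <= 2 * (1 - eps)).
  { pose proof (sum_containingb_nonneg n x (w false) (w_nonneg false)).
    pose proof (sum_containingb_nonneg n x (w true) (w_nonneg true)).
    unfold phi; destruct b; cbn [Bool.eqb]; split; try nra.
    - rewrite Rplus_comm, Rmult_1_l. apply tilted_mass_le; auto; lra.
    - rewrite Rmult_1_l. apply tilted_mass_le; auto. }
  eapply Rle_trans; [|apply pow_incr; exact Htilt].
  rewrite <- (sum_product_pieces_containing k x phi Hx), <- lsum_mulr.
  apply lsum_le; intros t Ht.
  destruct (product_piece_lengths k t Ht) as [_ Hlen].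
  pose proof (product_piece_weight_nonneg k t Ht) as Hwt.
  unfold phi; rewrite prod_votes_disagree.
  pose proof (pow_le q (disagree b (votes t)) ltac:(lra)).
  destruct (in_subcubeb x (cube t)); cbn [andb]; [|lra].
  destruct (Bool.eqb (majority (votes t)) b) eqn:Em; cbn [negb]; [nra|].
  apply Bool.eqb_false_iff, majority_neq in Em. rewrite Hlen in Em.
  apply Rmult_le_compat_l; [exact Hwt|].
  rewrite <- Hrr, Rpow_mult_distr, <- pow_add.
  replace (disagree b (votes t) + disagree b (votes t))%nat
    with (2 * disagree b (votes t))%nat by lia.
  apply Rle_pow; [exact Hr1 | exact Em].
Qed.

End Amplification.

Lemma amplified_feasible n w g eps delta k : 0 < eps < 1/2 -> 0 < delta ->
  (4 * eps * (1 - eps)) ^ k <= delta ^ 2 ->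
  qprt_feasible n eps g w -> qprt_feasible n delta g (amplified n w k).
Proof.
  intros He Hd Hk Hf. pose proof (proj1 Hf) as Hw.
  split; [|split].
  - intros z s _. apply amplified_nonneg, Hw.
  - intros x Hx. rewrite sum_containingE, sum_containingb_amplified.
    pose proof (feasible_mass n eps g w x Hf Hx) as Hmass.
    pose proof (mass_product_pieces n w k x Hx Hmass) as Hone.
    pose proof (proj1 (proj2 Hf) x Hx) as Hgood. rewrite sum_containingE in Hgood.
    pose proof (wrong_majority_mass n w Hw k x (g x) eps Hx He Hmass ltac:(lra)) as Hwrong.
    set (E := lsum _ (product_pieces n w k)) in Hwrong.
    assert (HE : E <= delta).
    { assert (0 <= E).
      { apply lsum_nonneg; intros t Ht.
        pose proof (product_piece_weight_nonneg n w Hw k t Ht) as Hwt.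
        destruct (_ && _)%bool; lra. }
      nra. }
    enough (lsum (fun t => if (in_subcubeb x (cube t) && Bool.eqb (majority (votes t)) (g x))%bool
                           then weight t else 0) (product_pieces n w k) + E = 1) by lra.
    rewrite <- Hone. unfold E. rewrite <- lsum_add. apply lsum_ext; intros t _.
    destruct (in_subcubeb x (cube t)), (Bool.eqb (majority (votes t)) (g x)); cbn; lra.
  - intros x Hx. rewrite sum_containingE.
    rewrite <- (mass_product_pieces n w k x Hx (feasible_mass n eps g w x Hf Hx)).
    transitivity (sum_containingb n x (amplified n w k false)
                  + sum_containingb n x (amplified n w k true)).
    { rewrite <- sum_containingb_add. apply sum_containingb_ext; intros s. apply lsum_bool. }
    rewrite !sum_containingb_amplified, <- lsum_add.
    apply lsum_ext; intros t _. destruct in_subcubeb, (majority (votes t)); cbn; lra.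
Qed.

Lemma ln_le x y : 0 < x -> x <= y -> ln x <= ln y.
Proof. intros Hx [Hlt|<-]; [left; apply ln_increasing|]; lra. Qed.

Lemma exp_le x y : x <= y -> exp x <= exp y.
Proof. intros [Hlt|<-]; [left; apply exp_increasing|]; lra. Qed.

Lemma exp_pow x k : exp x ^ k = exp (INR k * x).
Proof.
  induction k as [|k IH]; [cbn; rewrite Rmult_0_l, exp_0; reflexivity|].
  rewrite S_INR; cbn [pow]. rewrite IH, <- exp_plus. f_equal; ring.
Qed.

Lemma le_pow_is_inf (E : R -> Prop) m a k : (0 < k)%nat -> is_inf E m -> 0 < a ->
  (forall v, E v -> 0 < v /\ a <= v ^ k) -> a <= m ^ k.
Proof.
  intros Hk [_ Hglb] Ha HE.
  assert (Hk' : 0 < INR k) by (apply lt_0_INR; exact Hk).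
  set (b := exp (ln a / INR k)).
  assert (Hbk : b ^ k = a).
  { unfold b. rewrite exp_pow. replace (INR k * (ln a / INR k)) with (ln a) by (field; lra).
    apply exp_ln, Ha. }
  assert (Hbm : b <= m).
  { apply Hglb. intros v Hv. destruct (HE v Hv) as [Hv0 Hav].
    rewrite <- (exp_ln v) by exact Hv0. apply exp_le.
    apply Rmult_le_reg_l with (INR k); [exact Hk'|].
    replace (INR k * (ln a / INR k)) with (ln a) by (field; lra).
    rewrite <- ln_pow by exact Hv0. apply ln_le; assumption. }
  rewrite <- Hbk. apply pow_incr. split; [left; apply exp_pos | exact Hbm].
Qed.

Lemma qprt_le_pow n g eps delta k : 0 < delta -> delta < eps -> eps < 1/2 ->
  (4 * eps * (1 - eps)) ^ k <= delta ^ 2 -> qprt n delta g <= qprt n eps g ^ k.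
Proof.
  intros Hd Hde He Herr.
  assert (Hk : (0 < k)%nat) by (destruct k; [cbn in Herr; nra | lia]).
  pose proof (qprt_ge1 n delta g ltac:(lra)).
  apply (le_pow_is_inf _ _ _ k Hk (qprt_is_inf n eps g ltac:(lra))); [lra|].
  intros v [w [Hf ->]]. pose proof (qprt_objective_ge1 n eps g w Hf).
  split; [lra|].
  apply Rle_trans with (qprt_objective n (amplified n w k)).
  - apply (qprt_is_inf n delta g ltac:(lra)). exists (amplified n w k).
    split; [apply (amplified_feasible n w g eps); auto; lra | reflexivity].
  - rewrite objective_amplified. apply objective_product_pieces, Hf.
Qed.

Lemma ln_2_lt_1 : ln 2 < 1.
Proof.
  rewrite <- ln_exp. apply ln_increasing; [lra|].
  pose proof (exp_ineq1 1 ltac:(lra)). lra.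
Qed.

(* [k] is the least integer above [ln (1/delta) / (2 (1/2 - eps)^2)]. *)
Lemma repetitions_exist eps delta : 0 < delta < 1/2 -> 0 < eps < 1/2 ->
  exists k : nat, (4 * eps * (1 - eps)) ^ k <= delta ^ 2 /\
                  INR k * ((1/2 - eps) ^ 2 * ln 2) <= ln (1 / delta).
Proof.
  intros Hd He.
  set (c2 := (1/2 - eps) ^ 2). set (L := ln (1 / delta)).
  assert (Hc2 : 0 < c2 < 1/4) by (unfold c2; split; nra).
  assert (Hln2 : / 2 < ln 2 < 1) by (split; [apply ln_lt_2 | apply ln_2_lt_1]).
  assert (HL : ln 2 < L).
  { apply ln_increasing; [lra|]. unfold Rdiv. rewrite Rmult_1_l.
    apply Rmult_lt_reg_l with delta; [lra|]. rewrite Rinv_r; lra. }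
  assert (Hdelta2 : delta ^ 2 = exp (- (2 * L))).
  { unfold L. rewrite <- (exp_ln delta) at 1 by lra.
    rewrite exp_pow. f_equal. unfold Rdiv. rewrite Rmult_1_l, ln_Rinv by lra. cbn; ring. }
  destruct (archimed (L / (2 * c2))) as [Hup1 Hup2].
  set (z := up (L / (2 * c2))) in *.
  assert (Hz0 : (0 <= z)%Z).
  { apply le_IZR. enough (0 < L / (2 * c2)) by lra. apply Rdiv_lt_0_compat; lra. }
  exists (Z.to_nat z).
  rewrite INR_IZR_INZ, Z2Nat.id by exact Hz0.
  assert (Hkc : L <= IZR z * (2 * c2)).
  { replace L with (L / (2 * c2) * (2 * c2)) at 1 by (field; lra).
    apply Rmult_le_compat_r; lra. }
  split.
  - replace (4 * eps * (1 - eps)) with (1 - 4 * c2) by (unfold c2; field).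
    apply Rle_trans with (exp (- (4 * c2)) ^ Z.to_nat z).
    + apply pow_incr. pose proof (exp_ineq1_le (- (4 * c2))). lra.
    + rewrite exp_pow, INR_IZR_INZ, Z2Nat.id, Hdelta2 by exact Hz0.
      apply exp_le. lra.
  - assert (IZR z * (c2 * ln 2) <= (L / (2 * c2) + 1) * (c2 * ln 2)).
    { apply Rmult_le_compat_r; [|lra]. apply Rmult_le_pos; lra. }
    replace ((L / (2 * c2) + 1) * (c2 * ln 2)) with (L * ln 2 / 2 + c2 * ln 2) in H
      by (field; lra).
    nra.
Qed.

Lemma log2_le_of_le_pow a b L c k : 1 <= a -> 1 <= b -> a <= b ^ k -> 0 < c ->
  INR k * (c * ln 2) <= ln L -> log2 a <= 1 / c * log2 L * log2 b.
Proof.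
  intros Ha Hb Hab Hc Hk. pose proof ln_lt_2.
  assert (Hlnab : ln a <= INR k * ln b) by (rewrite <- ln_pow by lra; apply ln_le; lra).
  assert (Hlnb : 0 <= ln b) by (rewrite <- ln_1; apply ln_le; lra).
  unfold log2.
  replace (1 / c * (ln L / ln 2) * (ln b / ln 2))
    with (INR k * ln b / ln 2 + ln b * (ln L - INR k * (c * ln 2)) * / (c * ln 2 * ln 2))
    by (field; lra).
  assert (0 <= ln b * (ln L - INR k * (c * ln 2)) * / (c * ln 2 * ln 2)).
  { apply Rmult_le_pos; [apply Rmult_le_pos; lra|].
    left; apply Rinv_0_lt_compat, Rmult_lt_0_compat; [apply Rmult_lt_0_compat|]; lra. }
  assert (ln a / ln 2 <= INR k * ln b / ln 2)
    by (apply Rmult_le_compat_r; [left; apply Rinv_0_lt_compat|]; lra).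
  lra.
Qed.

Theorem mainTheorem8 :
  exists C : R, forall (n : nat) (g : list bool -> bool) (delta eps : R),
    0 < delta -> delta < eps -> eps < 1/2 ->
    log2 (qprt n delta g) <=
      C / (1/2 - eps)^2 * log2 (1 / delta) * log2 (qprt n eps g).
Proof.
  exists 1. intros n g delta eps Hd Hde He.
  destruct (repetitions_exist eps delta) as [k [Herr Hk]]; [lra | lra |].
  apply (log2_le_of_le_pow _ _ _ _ k).
  - apply qprt_ge1; lra.
  - apply qprt_ge1; lra.
  - exact (qprt_le_pow n g eps delta k Hd Hde He Herr).
  - apply pow_lt; lra.
  - exact Hk.
Qed.
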